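(* Let $m,n\ge2$ be integers and let $g_n(z)=\frac{z^n+n-1}{n}$ and $g_{m,n}(z)=\frac{(z^m+mn-1)^n}{(mn)^n}$. Both are polynomials having $1$ as a parabolic fixed point with multiplier $1$. For every $0\le r\le1$, with $D_r:=\{z:|z-(1-r)|<r\}$, one has $g_n(\overline{D_r})\subset D_r\cup\{1\}$ and $g_{m,n}(\overline{D_r})\subset D_r\cup\{1\}$. In particular, the immediate parabolic basins of $1$ of $g_n$ and of $g_{m,n}$ both contain the unit disk $\mathbb{D}$. *)

From Stdlib Require Import Reals.
Open Scope R_scope.

Definition C : Type := (R * R)%type.

Definition RtoC (x : R) : C := (x, 0).
Definition Cadd (z w : C) : C := (fst z + fst w, snd z + snd w).
Definition Copp (z : C) : C := (- fst z, - snd z).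
Definition Csub (z w : C) : C := Cadd z (Copp w).
Definition Cmul (z w : C) : C :=
  (fst z * fst w - snd z * snd w, fst z * snd w + snd z * fst w).
Definition Cinv (z : C) : C :=
  (fst z / (fst z ^ 2 + snd z ^ 2), - snd z / (fst z ^ 2 + snd z ^ 2)).
Definition Cdiv (z w : C) : C := Cmul z (Cinv w).
Fixpoint Cpow (z : C) (k : nat) : C :=
  match k with O => RtoC 1 | S k' => Cmul z (Cpow z k') end.
Definition Cmod (z : C) : R := sqrt (fst z ^ 2 + snd z ^ 2).

Definition g_n (n : nat) (z : C) : C :=
  Cmul (RtoC (/ INR n)) (Cadd (Cpow z n) (RtoC (INR n - 1))).

Definition g_mn (m n : nat) (z : C) : C :=
  Cmul (RtoC (/ (INR (m * n)) ^ n))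
       (Cpow (Cadd (Cpow z m) (RtoC (INR (m * n) - 1))) n).

Definition has_cderiv (f : C -> C) (p l : C) : Prop :=
  forall eps, 0 < eps -> exists delta, 0 < delta /\
    forall h : C, 0 < Cmod h < delta ->
      Cmod (Csub (Cdiv (Csub (f (Cadd p h)) (f p)) h) l) < eps.

Definition disk_r (r : R) (z : C) : Prop := Cmod (Csub z (RtoC (1 - r))) < r.
Definition cdisk_r (r : R) (z : C) : Prop := Cmod (Csub z (RtoC (1 - r))) <= r.

Definition unit_disk (z : C) : Prop := Cmod z < 1.

Definition iter (f : C -> C) (k : nat) (z : C) : C := Nat.iter k f z.

Definition basin (f : C -> C) (p z : C) : Prop :=
  (forall k, iter f k z <> p) /\
  (forall eps, 0 < eps -> exists N, forall k, (N <= k)%nat ->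
      Cmod (Csub (iter f k z) p) < eps).

Definition Copen (U : C -> Prop) : Prop :=
  forall z, U z -> exists eps, 0 < eps /\ forall w, Cmod (Csub w z) < eps -> U w.

Definition Cconnected (S : C -> Prop) : Prop :=
  ~ exists U V : C -> Prop, Copen U /\ Copen V /\
      (forall z, S z -> U z \/ V z) /\
      (exists z, S z /\ U z) /\ (exists z, S z /\ V z) /\
      (forall z, S z -> U z -> V z -> False).

(* immediate parabolic basin of p: union of the connected components of the
   basin of p whose closure contains p; z belongs to it iff some connected
   subset of the basin contains z and accumulates at p *)
Definition immediate_basin (f : C -> C) (p z : C) : Prop :=
  exists S : C -> Prop, Cconnected S /\ S z /\ (forall w, S w -> basin f p w) /\
    (forall eps, 0 < eps -> exists w, S w /\ Cmod (Csub w p) < eps).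

(* For z in the open unit disk put a(z) = |z - 1|^2 and b(z) = 1 - |z|^2.
   The disks D_r are the horodisks {(1 - r) a <= r b} tangent to the unit circle
   at 1, so with t = (1 - r)/r they read  t * a(z) <= b(z).  Both maps are built
   from two kinds of steps whose effect on the horodisk parameter t is explicit:
   - the power z ↦ z^k sends parameter t to t/k, since by Cauchy–Schwarz on the
     geometric sum 1 + z + ... + z^(k-1), a(z^k) b(z) <= k a(z) b(z^k);
   - the affine map u ↦ (u + N - 1)/N sends t to N t + N - 1.
   Hence g_n sends t to t + (n - 1) and g_{m,n} sends t to t + (m - 1/n): each
   map pushes every horodisk strictly inside a smaller one.  From this single
   "horocyclic drift" property we derive, for an arbitrary map f, the invariance
   of the disks D_r, the convergence a(f^j z) <= 1/(j k) -> 0 of orbits from the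
   unit disk, and (the segment from z to 1 being connected) the immediate basin
   statement.

   Complex numbers of Defs are pairs of reals with the usual operations, which
   coincide definitionally with those of Coquelicot's complex field; we use the
   latter for its ring/field tactics and its lemmas on the modulus. *)

From Pilot Require Import Defs.
From Stdlib Require Import Reals Lra Lia Psatz.
From Coquelicot Require Import Coquelicot.
Open Scope R_scope.

Definition sqdist1 (z : C) : R := (1 - fst z) ^ 2 + snd z ^ 2.
Definition defect (z : C) : R := 1 - (fst z ^ 2 + snd z ^ 2).

Lemma Cmod_sq (z : C) : Cmod z ^ 2 = fst z ^ 2 + snd z ^ 2.
Proof. unfold Cmod. rewrite pow2_sqrt; nra. Qed.

Lemma sqdist1_Cmod (z : C) : sqdist1 z = Cmod (z - 1)%C ^ 2.
Proof. rewrite Cmod_sq. destruct z; unfold sqdist1; simpl; ring. Qed.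

Lemma defect_Cmod (z : C) : defect z = 1 - Cmod z ^ 2.
Proof. now rewrite Cmod_sq. Qed.

Lemma sqdist1_nonneg (z : C) : 0 <= sqdist1 z.
Proof. unfold sqdist1; pose proof (pow2_ge_0 (1 - fst z)); pose proof (pow2_ge_0 (snd z)); lra. Qed.

Lemma defect_le1 (z : C) : defect z <= 1.
Proof. unfold defect; pose proof (pow2_ge_0 (fst z)); pose proof (pow2_ge_0 (snd z)); lra. Qed.

Lemma sqdist1_eq0 (z : C) : sqdist1 z = 0 -> z = RtoC 1.
Proof.
  destruct z as [x y]; unfold sqdist1; simpl; intros H.
  assert (x = 1) by nra. assert (y = 0) by nra. now subst.
Qed.

Lemma defect_one : defect 1 = 0.
Proof. unfold defect; simpl; ring. Qed.

Definition horo (t : R) (z : C) : Prop := 0 < defect z /\ t * sqdist1 z <= defect z.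

(* The disks D_r are horodisks: |w - (1 - r)|^2 - r^2 = (1 - r) |w - 1|^2 - r (1 - |w|^2). *)
Lemma disk_gap (r : R) (w : C) :
  Cmod (w - RtoC (1 - r))%C ^ 2 - r ^ 2 = (1 - r) * sqdist1 w - r * defect w.
Proof. rewrite Cmod_sq. destruct w; unfold sqdist1, defect; simpl; ring. Qed.

Lemma cdisk_horo (r : R) (z : C) : 0 <= r -> cdisk_r r z -> (1 - r) * sqdist1 z <= r * defect z.
Proof.
  intros Hr Hz. change (Cmod (z - RtoC (1 - r))%C <= r) in Hz.
  pose proof (disk_gap r z). pose proof (Cmod_ge_0 (z - RtoC (1 - r))%C). nra.
Qed.

Lemma horo_disk (r : R) (w : C) : 0 <= r -> (1 - r) * sqdist1 w < r * defect w -> disk_r r w.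
Proof.
  intros Hr Hw. change (Cmod (w - RtoC (1 - r))%C < r).
  pose proof (disk_gap r w). pose proof (Cmod_ge_0 (w - RtoC (1 - r))%C). nra.
Qed.

Lemma unit_disk_horo (z : C) : Cmod z < 1 -> horo 0 z.
Proof.
  intros Hz. unfold horo. rewrite defect_Cmod. pose proof (Cmod_ge_0 z).
  split; [nra | rewrite Rmult_0_l; nra].
Qed.

Fixpoint geom (t : R) (k : nat) : R :=
  match k with O => 0 | S k => geom t k + t ^ k end.
Fixpoint cgeom (z : C) (k : nat) : C :=
  match k with O => 0%C | S k => (cgeom z k + z ^ k)%C end.

Lemma geom_factor (t : R) (k : nat) : 1 - t ^ k = (1 - t) * geom t k.
Proof. induction k; simpl; [ring | nra]. Qed.

Lemma cgeom_factor (z : C) (k : nat) : (z ^ k - 1 = (z - 1) * cgeom z k)%C.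
Proof.
  induction k; simpl; [ring|].
  transitivity ((z ^ k - 1) + z ^ k * (z - 1))%C; [ring|]. rewrite IHk; ring.
Qed.

Lemma Cmod_cgeom_le (z : C) (k : nat) : Cmod (cgeom z k) <= geom (Cmod z) k.
Proof.
  induction k; simpl.
  - rewrite Cmod_0; lra.
  - eapply Rle_trans; [apply Cmod_triangle|]. rewrite Cmod_pow; lra.
Qed.

Lemma geom_ge1 (t : R) (k : nat) : 0 <= t -> (1 <= k)%nat -> 1 <= geom t k.
Proof.
  intros Ht Hk; induction Hk; simpl; [lra|].
  pose proof (pow_le t m Ht); lra.
Qed.

Lemma pow_sq_pow (t : R) (j : nat) : (t ^ 2) ^ j = t ^ j * t ^ j.
Proof. rewrite <- pow_mult, <- pow_add. f_equal; lia. Qed.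

(* Cauchy–Schwarz for geometric sums: (sum t^i)^2 <= k * sum t^(2i),
   obtained from 2 c t^i <= t^(2i) + c^2 summed over i. *)
Lemma geom_cross_le (t c : R) (k : nat) :
  2 * c * geom t k <= geom (t ^ 2) k + INR k * c ^ 2.
Proof.
  induction k; cbn [geom]; [simpl; lra|].
  rewrite S_INR, pow_sq_pow. pose proof (pow2_ge_0 (c - t ^ k)). nra.
Qed.

Lemma geom_sq_le (t : R) (k : nat) : geom t k ^ 2 <= INR k * geom (t ^ 2) k.
Proof.
  induction k; cbn [geom]; [simpl; lra|].
  rewrite S_INR, pow_sq_pow. pose proof (geom_cross_le t (t ^ k) k).
  set (g := geom t k) in *; set (p := t ^ k) in *; set (G := geom (t ^ 2) k) in *. nra.
Qed.

Lemma defect_pow (z : C) (k : nat) : defect (z ^ k)%C = defect z * geom (Cmod z ^ 2) k.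
Proof.
  rewrite !defect_Cmod, Cmod_pow, <- pow_mult, Nat.mul_comm, pow_mult. apply geom_factor.
Qed.

Lemma sqdist1_pow_le (z : C) (k : nat) :
  sqdist1 (z ^ k)%C <= INR k * sqdist1 z * geom (Cmod z ^ 2) k.
Proof.
  rewrite !sqdist1_Cmod, cgeom_factor, Cmod_mult.
  pose proof (Cmod_cgeom_le z k). pose proof (Cmod_ge_0 (cgeom z k)).
  pose proof (geom_sq_le (Cmod z) k). pose proof (Cmod_ge_0 (z - 1)%C).
  set (A := Cmod (z - 1)%C) in *. set (S := Cmod (cgeom z k)) in *.
  set (g := geom (Cmod z) k) in *.
  assert (S ^ 2 <= g ^ 2) by nra. nra.
Qed.

Lemma horo_pow (t : R) (k : nat) (z : C) : 0 <= t -> (1 <= k)%nat ->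
  horo t z -> horo (t / INR k) (z ^ k)%C.
Proof.
  intros Ht Hk [Hb Ha].
  assert (Hk1 : 1 <= INR k) by (apply (le_INR 1); lia).
  pose proof (geom_ge1 (Cmod z ^ 2) k (pow2_ge_0 _) Hk) as Hg.
  pose proof (sqdist1_pow_le z k) as Hd. unfold horo; rewrite defect_pow.
  set (g := geom (Cmod z ^ 2) k) in *.
  split; [nra|].
  apply (Rmult_le_reg_l (INR k)); [lra|].
  replace (INR k * (t / INR k * sqdist1 (z ^ k)%C)) with (t * sqdist1 (z ^ k)%C) by (field; lra).
  apply (Rle_trans _ (t * (INR k * sqdist1 z * g))); [now apply Rmult_le_compat_l|].
  replace (t * (INR k * sqdist1 z * g)) with (INR k * g * (t * sqdist1 z)) by ring.
  replace (INR k * (defect z * g)) with (INR k * g * defect z) by ring.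
  apply Rmult_le_compat_l; nra.
Qed.

Lemma defect_pow_pos (z : C) (k : nat) : (1 <= k)%nat -> 0 < defect z -> 0 < defect (z ^ k)%C.
Proof.
  intros Hk Hb. rewrite defect_pow. pose proof (geom_ge1 (Cmod z ^ 2) k (pow2_ge_0 _) Hk). nra.
Qed.

Lemma defect_pow_nonneg (z : C) (k : nat) : (1 <= k)%nat -> 0 <= defect z -> 0 <= defect (z ^ k)%C.
Proof.
  intros Hk Hb. rewrite defect_pow. pose proof (geom_ge1 (Cmod z ^ 2) k (pow2_ge_0 _) Hk). nra.
Qed.

Definition aff (N : R) (u : C) : C := (RtoC (/ N) * (u + RtoC (N - 1)))%C.

Lemma sqdist1_aff (N : R) (u : C) : 0 < N -> N ^ 2 * sqdist1 (aff N u) = sqdist1 u.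
Proof. intros. destruct u as [x y]. unfold sqdist1, aff; simpl. field. lra. Qed.

Lemma defect_aff (N : R) (u : C) : 0 < N ->
  N ^ 2 * defect (aff N u) = N * defect u + (N - 1) * sqdist1 u.
Proof. intros. destruct u as [x y]. unfold sqdist1, defect, aff; simpl. field. lra. Qed.

Lemma horo_aff (N t : R) (u : C) : 1 <= N -> 0 <= t ->
  horo t u -> horo (N * t + N - 1) (aff N u).
Proof.
  intros HN Ht [Hb Ha].
  pose proof (sqdist1_aff N u ltac:(lra)) as Ea. pose proof (defect_aff N u ltac:(lra)) as Eb.
  pose proof (sqdist1_nonneg u). assert (HN2 : 0 < N ^ 2) by nra.
  assert (N * (t * sqdist1 u) <= N * defect u) by (apply Rmult_le_compat_l; lra).
  split.
  - apply (Rmult_lt_reg_l (N ^ 2)); [lra|]. rewrite Eb. nra.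
  - apply (Rmult_le_reg_l (N ^ 2)); [lra|]. rewrite Eb.
    replace (N ^ 2 * ((N * t + N - 1) * sqdist1 (aff N u)))
      with ((N * t + N - 1) * (N ^ 2 * sqdist1 (aff N u))) by ring.
    rewrite Ea. lra.
Qed.

Lemma aff_closed (N : R) (u : C) : 1 < N -> 0 <= defect u ->
  0 < defect (aff N u) \/ aff N u = RtoC 1.
Proof.
  intros HN Hb. pose proof (defect_aff N u ltac:(lra)). pose proof (sqdist1_nonneg u).
  destruct (Req_dec (sqdist1 u) 0) as [E|E].
  - destruct (Req_dec (defect u) 0) as [E2|E2].
    + right. apply sqdist1_eq0 in E. subst u. unfold aff. rewrite <- RtoC_plus, <- RtoC_mult.
      f_equal. field. lra.
    + left. nra.
  - left. nra.
Qed.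

Lemma mul_scaled_lt (L eps : R) : 0 <= L -> 0 < eps -> L * (eps / (L + 1)) < eps.
Proof.
  intros HL Heps. apply (Rmult_lt_reg_r (L + 1)); [lra|].
  replace (L * (eps / (L + 1)) * (L + 1)) with (L * eps) by (field; lra). nra.
Qed.

Definition rel_open (a b : R) (P : R -> Prop) : Prop :=
  forall t, a <= t <= b -> P t ->
    exists d, 0 < d /\ forall s, a <= s <= b -> Rabs (s - t) < d -> P s.

(* [a, b] cannot be split into two disjoint relatively open pieces
   containing a and b respectively (supremum argument). *)
Lemma interval_connected (a b : R) (P Q : R -> Prop) : a <= b ->
  rel_open a b P -> rel_open a b Q ->
  (forall t, a <= t <= b -> P t \/ Q t) ->
  (forall t, a <= t <= b -> P t -> Q t -> False) ->
  P a -> Q b -> False.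
Proof.
  intros Hab HP HQ Hcov Hdis Pa Qb.
  set (E := fun s => a <= s <= b /\ forall t, a <= t <= s -> P t).
  assert (Ea : E a) by (split; [lra | intros t Ht; replace t with a by lra; exact Pa]).
  destruct (completeness E) as [sg [Hub Hlub]];
    [exists b; intros s [Hs _]; lra | now exists a |].
  assert (Hsg : a <= sg <= b) by (split; [now apply Hub | apply Hlub; intros s [Hs _]; lra]).
  assert (Pbelow : forall t, a <= t < sg -> P t).
  { intros t Ht. destruct (Hcov t ltac:(lra)) as [Pt|Qt]; [exact Pt|].
    enough (sg <= t) by lra. apply Hlub. intros s [Hs Ps].
    destruct (Rle_lt_dec s t) as [Hst|Hst]; [exact Hst|].
    exfalso. apply (Hdis t); [lra | apply Ps; lra | exact Qt]. }
  destruct (Hcov sg Hsg) as [Psg|Qsg].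
  - (* P holds on [a, sg] and on a neighbourhood of sg, so sg = b, where Q holds too *)
    destruct (HP sg Hsg Psg) as [d [Hd Pnear]].
    destruct (Req_dec sg b) as [->|Hne]; [now apply (Hdis b) |].
    set (s := Rmin (sg + d / 2) b).
    assert (Es : E s).
    { assert (sg < s) by (apply Rmin_glb_lt; lra).
      assert (s <= sg + d / 2) by apply Rmin_l. assert (s <= b) by apply Rmin_r.
      split; [lra|]. intros t Ht. destruct (Rlt_le_dec t sg); [apply Pbelow; lra|].
      apply Pnear; [lra | rewrite Rabs_right; lra]. }
    assert (sg < s) by (apply Rmin_glb_lt; lra).
    specialize (Hub s Es). lra.
  - (* Q holds near sg, but P holds just below sg *)
    destruct (HQ sg Hsg Qsg) as [d [Hd Qnear]].
    destruct (Req_dec sg a) as [->|Hne]; [now apply (Hdis a) |].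
    set (t := Rmax a (sg - d / 2)).
    assert (t < sg) by (apply Rmax_lub_lt; lra).
    assert (a <= t) by apply Rmax_l. assert (sg - d / 2 <= t) by apply Rmax_r.
    apply (Hdis t); [lra | apply Pbelow; lra | apply Qnear; [lra | rewrite Rabs_left1; lra]].
Qed.

Lemma pullback_open (a b : R) (p : R -> C) (W : C -> Prop) :
  (forall t eps, 0 < eps -> exists d, 0 < d /\ forall s, Rabs (s - t) < d -> Cmod (p s - p t)%C < eps) ->
  Copen W -> rel_open a b (fun t => W (p t)).
Proof.
  intros Hp HW t _ Wt. destruct (HW (p t) Wt) as [e [He HWe]].
  destruct (Hp t e He) as [d [Hd Hnear]]. exists d. split; [exact Hd|].
  intros s _ Hs. apply HWe. exact (Hnear s Hs).
Qed.

Lemma image_connected (I : R -> Prop) (p : R -> C) :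
  (forall a b t, I a -> I b -> a <= t <= b -> I t) ->
  (forall t eps, 0 < eps -> exists d, 0 < d /\ forall s, Rabs (s - t) < d -> Cmod (p s - p t)%C < eps) ->
  Cconnected (fun w => exists t, I t /\ w = p t).
Proof.
  intros HI Hp [U [V [HU [HV [Hcov [[w0 [[t0 [It0 ->]] U0]] [[w1 [[t1 [It1 ->]] V1]] Hdis]]]]]]].
  assert (Hcov' : forall t, I t -> U (p t) \/ V (p t)) by (intros t It; apply Hcov; eauto).
  assert (Hdis' : forall t, I t -> U (p t) -> V (p t) -> False) by (intros t It; apply Hdis; eauto).
  destruct (Rle_lt_dec t0 t1) as [H01|H10].
  - apply (interval_connected t0 t1 (fun t => U (p t)) (fun t => V (p t))); auto;
      try (apply pullback_open; assumption); intros t Ht; [apply Hcov' | apply Hdis'];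
      now apply (HI t0 t1).
  - apply (interval_connected t1 t0 (fun t => V (p t)) (fun t => U (p t))); auto; [lra| | | |];
      try (apply pullback_open; assumption); intros t Ht.
    + destruct (Hcov' t (HI t1 t0 t It1 It0 Ht)); tauto.
    + intros Vt Ut. now apply (Hdis' t (HI t1 t0 t It1 It0 Ht)).
Qed.

Section HorocyclicDynamics.

Variable f : C -> C.
Variable k : R.
Hypothesis k_pos : 0 < k.
Hypothesis f_horo : forall t z, 0 <= t -> horo t z -> horo (t + k) (f z).

Lemma horo_strict (t : R) (w : C) : horo (t + k) w -> t * sqdist1 w < defect w.
Proof.
  intros [Hb Ha]. pose proof (sqdist1_nonneg w).
  destruct (Req_dec (sqdist1 w) 0) as [E|E]; [rewrite E; lra | nra].
Qed.

(* Invariance of the disks D_r, given that f fixes 1 and maps the closed unit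
   disk into the open one except onto 1 (needed for r = 1). *)
Lemma disk_invariant :
  f (RtoC 1) = RtoC 1 ->
  (forall z, 0 <= defect z -> 0 < defect (f z) \/ f z = RtoC 1) ->
  forall r, 0 <= r <= 1 -> forall z, cdisk_r r z -> disk_r r (f z) \/ f z = RtoC 1.
Proof.
  intros f_one f_closed r Hr z Hz.
  pose proof (cdisk_horo r z (proj1 Hr) Hz) as Hzr. pose proof (sqdist1_nonneg z).
  destruct (Req_dec r 1) as [->|Hr1].
  - destruct (f_closed z ltac:(lra)) as [Hb|E]; [left | now right].
    apply horo_disk; lra.
  - destruct (Req_dec (sqdist1 z) 0) as [E|E].
    { right. apply sqdist1_eq0 in E. now subst z. }
    assert (Hpos : 0 < r * defect z) by (apply (Rlt_le_trans _ ((1 - r) * sqdist1 z)); [nra | lra]).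
    assert (Hr0 : 0 < r) by (destruct (Req_dec r 0) as [->|]; [lra | lra]).
    assert (Ht : 0 <= (1 - r) / r) by (apply Rdiv_le_0_compat; lra).
    assert (Hzt : horo ((1 - r) / r) z).
    { split; [nra|]. apply (Rmult_le_reg_l r); [lra|].
      replace (r * ((1 - r) / r * sqdist1 z)) with ((1 - r) * sqdist1 z) by (field; lra). lra. }
    left. apply horo_disk; [lra|].
    pose proof (horo_strict _ _ (f_horo _ _ Ht Hzt)) as Hs.
    replace ((1 - r) * sqdist1 (f z)) with (r * ((1 - r) / r * sqdist1 (f z))) by (field; lra).
    apply Rmult_lt_compat_l; lra.
Qed.

Lemma horo_iter (z : C) : horo 0 z -> forall j, horo (INR j * k) (iter f j z).
Proof.
  intros Hz j. induction j as [|j IH].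
  - now rewrite Rmult_0_l.
  - change (horo (INR (S j) * k) (f (iter f j z))).
    rewrite S_INR, Rmult_plus_distr_r, Rmult_1_l.
    apply f_horo; [|exact IH]. apply Rmult_le_pos; [apply pos_INR | lra].
Qed.

(* Orbits from the unit disk converge to 1, since |f^j z - 1|^2 <= 1/(j k),
   and never reach 1, which lies on the unit circle. *)
Lemma basin_of_unit_disk (z : C) : Cmod z < 1 -> basin f (RtoC 1) z.
Proof.
  intros Hz. apply unit_disk_horo in Hz. pose proof (horo_iter z Hz) as Horb. split.
  - intros j E. destruct (Horb j) as [Hb _]. rewrite E, defect_one in Hb. lra.
  - intros eps Heps.
    assert (Hke : 0 < k * eps ^ 2) by (apply Rmult_lt_0_compat; [lra | apply pow_lt; lra]).
    destruct (INR_unbounded (/ (k * eps ^ 2))) as [N HN].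
    exists N. intros j Hj. apply le_INR in Hj.
    destruct (Horb j) as [_ Ha]. pose proof (defect_le1 (iter f j z)).
    pose proof (sqdist1_nonneg (iter f j z)).
    assert (Hlarge : 1 < INR j * (k * eps ^ 2)).
    { apply (Rmult_lt_reg_r (/ (k * eps ^ 2))); [now apply Rinv_0_lt_compat|].
      rewrite Rmult_assoc, Rinv_r, Rmult_1_r, Rmult_1_l; lra. }
    assert (Hsq : Cmod (iter f j z - 1)%C ^ 2 < eps ^ 2).
    { rewrite <- sqdist1_Cmod. apply Rnot_le_lt. intros Hge.
      assert (0 <= INR j * k) by (apply Rmult_le_pos; [apply pos_INR | lra]).
      assert (INR j * k * eps ^ 2 <= INR j * k * sqdist1 (iter f j z)) by (apply Rmult_le_compat_l; lra).
      lra. }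
    change (Cmod (iter f j z - 1)%C < eps).
    pose proof (Cmod_ge_0 (iter f j z - 1)%C). nra.
Qed.

(* The segment [z, 1) lies in the unit disk, hence in the basin; it is connected
   and accumulates at 1. *)
Lemma immediate_basin_of_unit_disk (z : C) : Cmod z < 1 -> immediate_basin f (RtoC 1) z.
Proof.
  intros Hz.
  set (p := fun t : R => (z + RtoC t * (1 - z))%C).
  set (L := Cmod (1 - z)%C). assert (HL : 0 <= L) by apply Cmod_ge_0.
  assert (Hlip : forall s t, Cmod (p s - p t)%C = L * Rabs (s - t)).
  { intros s t. unfold p, L.
    replace (z + RtoC s * (1 - z) - (z + RtoC t * (1 - z)))%C with (RtoC (s - t) * (1 - z))%C
      by (rewrite RtoC_minus; ring).
    rewrite Cmod_mult, Cmod_R. ring. }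
  exists (fun w => exists t, 0 <= t < 1 /\ w = p t). split; [|split; [|split]].
  - apply image_connected; [intros a b t Ha Hb Ht; lra|].
    intros t eps Heps. exists (eps / (L + 1)). split; [apply Rdiv_lt_0_compat; lra|].
    intros s Hs. rewrite Hlip.
    apply (Rle_lt_trans _ (L * (eps / (L + 1)))); [apply Rmult_le_compat_l; lra|].
    now apply mul_scaled_lt.
  - exists 0. split; [lra|]. unfold p. rewrite Cmult_0_l, Cplus_0_r. reflexivity.
  - intros w [t [Ht ->]]. apply basin_of_unit_disk.
    replace (p t) with (RtoC (1 - t) * z + RtoC t)%C by (unfold p; rewrite RtoC_minus; ring).
    eapply Rle_lt_trans; [apply Cmod_triangle|].
    rewrite Cmod_mult, !Cmod_R, !Rabs_right by lra. pose proof (Cmod_ge_0 z). nra.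
  - intros eps Heps. set (d := Rmin (1 / 2) (eps / (L + 1))).
    assert (Hd : 0 < d) by (apply Rmin_pos; [lra | apply Rdiv_lt_0_compat; lra]).
    assert (d <= 1 / 2) by apply Rmin_l. assert (Hde : d <= eps / (L + 1)) by apply Rmin_r.
    exists (p (1 - d)). split; [exists (1 - d); split; [lra | reflexivity]|].
    assert (Ep1 : p 1 = RtoC 1) by (unfold p; ring).
    change (Cmod (p (1 - d)%R - 1)%C < eps). rewrite <- Ep1, Hlip.
    replace (1 - d - 1) with (- d) by ring. rewrite Rabs_Ropp, Rabs_right by lra.
    apply (Rle_lt_trans _ (L * (eps / (L + 1)))); [apply Rmult_le_compat_l; lra|].
    now apply mul_scaled_lt.
Qed.

End HorocyclicDynamics.

Definition qdiff (f : C -> C) (p l : C) : Prop :=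
  exists K d, 0 <= K /\ 0 < d /\
    forall h, Cmod h < d -> Cmod (f (p + h) - f p - l * h)%C <= K * Cmod h ^ 2.

Lemma qdiff_const (c p : C) : qdiff (fun _ => c) p 0.
Proof.
  exists 0, 1. repeat split; try lra. intros h _.
  replace (c - c - 0 * h)%C with (RtoC 0) by ring. rewrite Cmod_0. lra.
Qed.

Lemma qdiff_id (p : C) : qdiff (fun z => z) p 1.
Proof.
  exists 0, 1. repeat split; try lra. intros h _.
  replace (p + h - p - 1 * h)%C with (RtoC 0) by ring. rewrite Cmod_0. lra.
Qed.

Lemma qdiff_add (f g : C -> C) (p lf lg : C) :
  qdiff f p lf -> qdiff g p lg -> qdiff (fun z => f z + g z)%C p (lf + lg).
Proof.
  intros [K1 [d1 [HK1 [Hd1 H1]]]] [K2 [d2 [HK2 [Hd2 H2]]]].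
  exists (K1 + K2), (Rmin d1 d2). repeat split; [lra | now apply Rmin_pos |].
  intros h Hh. pose proof (Rmin_l d1 d2). pose proof (Rmin_r d1 d2).
  replace (f (p + h) + g (p + h) - (f p + g p) - (lf + lg) * h)%C
    with ((f (p + h) - f p - lf * h) + (g (p + h) - g p - lg * h))%C by ring.
  eapply Rle_trans; [apply Cmod_triangle|].
  specialize (H1 h ltac:(lra)). specialize (H2 h ltac:(lra)). lra.
Qed.

Lemma qdiff_lipschitz (f : C -> C) (p l : C) : qdiff f p l ->
  exists L d, 0 <= L /\ 0 < d /\ forall h, Cmod h < d -> Cmod (f (p + h) - f p)%C <= L * Cmod h.
Proof.
  intros [K [d [HK [Hd H]]]]. exists (Cmod l + K), (Rmin 1 d).
  pose proof (Cmod_ge_0 l). repeat split; [lra | apply Rmin_pos; lra |].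
  intros h Hh. pose proof (Rmin_l 1 d). pose proof (Rmin_r 1 d). pose proof (Cmod_ge_0 h).
  replace (f (p + h) - f p)%C with ((f (p + h) - f p - l * h) + l * h)%C by ring.
  eapply Rle_trans; [apply Cmod_triangle|]. rewrite Cmod_mult.
  specialize (H h ltac:(lra)).
  assert (K * Cmod h ^ 2 <= K * Cmod h) by (apply Rmult_le_compat_l; nra). nra.
Qed.

Lemma qdiff_mul (f g : C -> C) (p lf lg : C) :
  qdiff f p lf -> qdiff g p lg -> qdiff (fun z => f z * g z)%C p (lf * g p + f p * lg).
Proof.
  intros Hf Hg.
  destruct (qdiff_lipschitz f p lf Hf) as [L1 [e1 [HL1 [He1 Lip1]]]].
  destruct (qdiff_lipschitz g p lg Hg) as [L2 [e2 [HL2 [He2 Lip2]]]].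
  destruct Hf as [K1 [d1 [HK1 [Hd1 H1]]]]. destruct Hg as [K2 [d2 [HK2 [Hd2 H2]]]].
  set (A := Cmod (f p)). set (B := Cmod (g p)).
  assert (HA : 0 <= A) by apply Cmod_ge_0. assert (HB : 0 <= B) by apply Cmod_ge_0.
  exists (A * K2 + B * K1 + L1 * L2), (Rmin (Rmin d1 d2) (Rmin e1 e2)).
  repeat split; [nra | repeat apply Rmin_pos; lra |].
  intros h Hh.
  pose proof (Rmin_l (Rmin d1 d2) (Rmin e1 e2)). pose proof (Rmin_r (Rmin d1 d2) (Rmin e1 e2)).
  pose proof (Rmin_l d1 d2). pose proof (Rmin_r d1 d2). pose proof (Rmin_l e1 e2). pose proof (Rmin_r e1 e2).
  (* the remainder of f g splits as f(p) err_g + err_f g(p) + (Δf)(Δg) *)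
  replace (f (p + h) * g (p + h) - f p * g p - (lf * g p + f p * lg) * h)%C
    with (f p * (g (p + h) - g p - lg * h) + (f (p + h) - f p - lf * h) * g p
          + (f (p + h) - f p) * (g (p + h) - g p))%C by ring.
  eapply Rle_trans; [apply Cmod_triangle|].
  eapply Rle_trans; [apply Rplus_le_compat_r, Cmod_triangle|].
  rewrite !Cmod_mult. fold A B.
  specialize (H1 h ltac:(lra)). specialize (H2 h ltac:(lra)).
  specialize (Lip1 h ltac:(lra)). specialize (Lip2 h ltac:(lra)).
  assert (A * Cmod (g (p + h) - g p - lg * h)%C <= A * (K2 * Cmod h ^ 2)) by (apply Rmult_le_compat_l; lra).
  assert (Cmod (f (p + h) - f p - lf * h)%C * B <= K1 * Cmod h ^ 2 * B) by (apply Rmult_le_compat_r; lra).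
  assert (Cmod (f (p + h) - f p)%C * Cmod (g (p + h) - g p)%C <= L1 * Cmod h * (L2 * Cmod h))
    by (apply Rmult_le_compat; try apply Cmod_ge_0; lra).
  nra.
Qed.

Lemma qdiff_pow (F : C -> C) (p l : C) (k : nat) :
  qdiff F p l -> qdiff (fun z => F z ^ S k)%C p (RtoC (INR (S k)) * F p ^ k * l).
Proof.
  intros HF. induction k as [|k IH].
  - destruct HF as [K [d [HK [Hd H]]]]. exists K, d. repeat split; auto.
    intros h Hh. replace (F (p + h) ^ 1 - F p ^ 1 - RtoC (INR 1) * F p ^ 0 * l * h)%C
      with (F (p + h) - F p - l * h)%C by (simpl; ring). auto.
  - assert (E : (RtoC (INR (S (S k))) * F p ^ S k * l
                 = l * F p ^ S k + F p * (RtoC (INR (S k)) * F p ^ k * l))%C).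
    { rewrite !S_INR, !RtoC_plus. simpl. ring. }
    rewrite E. exact (qdiff_mul F (fun z => F z ^ S k)%C p l _ HF IH).
Qed.

Lemma qdiff_cderiv (f : C -> C) (p l l' : C) : qdiff f p l -> l = l' -> has_cderiv f p l'.
Proof.
  intros [K [d [HK [Hd H]]]] <- eps Heps.
  exists (Rmin d (eps / (K + 1))). split; [apply Rmin_pos; [lra | apply Rdiv_lt_0_compat; lra]|].
  intros h [Hh0 Hh]. change (0 < Cmod h) in Hh0. change (Cmod h < Rmin d (eps / (K + 1))) in Hh.
  pose proof (Rmin_l d (eps / (K + 1))). pose proof (Rmin_r d (eps / (K + 1))).
  change (Cmod ((f (p + h) - f p) / h - l)%C < eps).
  assert (hnz : h <> RtoC 0) by (apply Cmod_gt_0; auto).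
  replace ((f (p + h) - f p) / h - l)%C with ((f (p + h) - f p - l * h) / h)%C by (field; auto).
  rewrite Cmod_div by auto.
  specialize (H h ltac:(lra)).
  apply (Rmult_lt_reg_r (Cmod h)); [auto|].
  unfold Rdiv. rewrite Rmult_assoc, Rinv_l, Rmult_1_r by lra.
  assert (K * Cmod h < eps).
  { apply (Rle_lt_trans _ (K * (eps / (K + 1)))); [apply Rmult_le_compat_l; lra|].
    now apply mul_scaled_lt. }
  nra.
Qed.

Lemma g_n_aff (n : nat) (z : C) : g_n n z = aff (INR n) (z ^ n)%C.
Proof. reflexivity. Qed.

Lemma g_mn_aff (m n : nat) (z : C) : g_mn m n z = (aff (INR (m * n)) (z ^ m) ^ n)%C.
Proof.
  unfold aff. change (RtoC (/ INR (m * n) ^ n) * (z ^ m + RtoC (INR (m * n) - 1)) ^ n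
    = (RtoC (/ INR (m * n)) * (z ^ m + RtoC (INR (m * n) - 1))) ^ n)%C.
  now rewrite Cpow_mult_l, <- RtoC_pow, pow_inv.
Qed.

Lemma horo_g_n (n : nat) (t : R) (z : C) : (2 <= n)%nat -> 0 <= t ->
  horo t z -> horo (t + (INR n - 1)) (g_n n z).
Proof.
  intros Hn Ht Hz. assert (HN : 2 <= INR n) by (apply (le_INR 2); lia).
  rewrite g_n_aff.
  replace (t + (INR n - 1)) with (INR n * (t / INR n) + INR n - 1) by (field; lra).
  apply horo_aff; [lra | apply Rdiv_le_0_compat; lra |].
  apply horo_pow; auto; lia.
Qed.

Lemma horo_g_mn (m n : nat) (t : R) (z : C) : (2 <= m)%nat -> (2 <= n)%nat -> 0 <= t ->
  horo t z -> horo (t + (INR m - / INR n)) (g_mn m n z).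
Proof.
  intros Hm Hn Ht Hz.
  assert (HM : 2 <= INR m) by (apply (le_INR 2); lia).
  assert (HN : 2 <= INR n) by (apply (le_INR 2); lia).
  rewrite g_mn_aff, mult_INR.
  replace (t + (INR m - / INR n))
    with ((INR m * INR n * (t / INR m) + INR m * INR n - 1) / INR n) by (field; lra).
  apply horo_pow; [| lia |].
  - assert (0 <= INR m * INR n * (t / INR m)) by (apply Rmult_le_pos; [nra | apply Rdiv_le_0_compat; lra]).
    nra.
  - apply horo_aff; [nra | apply Rdiv_le_0_compat; lra |].
    apply horo_pow; auto; lia.
Qed.

Lemma closed_g_n (n : nat) (z : C) : (2 <= n)%nat -> 0 <= defect z ->
  0 < defect (g_n n z) \/ g_n n z = RtoC 1.
Proof.
  intros Hn Hz. assert (HN : 2 <= INR n) by (apply (le_INR 2); lia).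
  apply aff_closed; [lra|]. apply defect_pow_nonneg; auto; lia.
Qed.

Lemma closed_g_mn (m n : nat) (z : C) : (2 <= m)%nat -> (2 <= n)%nat -> 0 <= defect z ->
  0 < defect (g_mn m n z) \/ g_mn m n z = RtoC 1.
Proof.
  intros Hm Hn Hz. assert (HMN : 1 < INR (m * n)) by (apply (lt_INR 1); nia).
  rewrite g_mn_aff.
  destruct (aff_closed (INR (m * n)) (z ^ m)%C) as [Hb|E1];
    [lra | apply defect_pow_nonneg; auto; lia | left | right].
  - apply defect_pow_pos; auto; lia.
  - rewrite E1. apply Cpow_1_l.
Qed.

Lemma g_n_one (n : nat) : (1 <= n)%nat -> g_n n (RtoC 1) = RtoC 1.
Proof.
  intros Hn. rewrite g_n_aff. unfold aff. rewrite Cpow_1_l, <- RtoC_plus, <- RtoC_mult.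
  assert (1 <= INR n) by (apply (le_INR 1); lia). f_equal. field. lra.
Qed.

Lemma g_mn_one (m n : nat) : (1 <= m)%nat -> (1 <= n)%nat -> g_mn m n (RtoC 1) = RtoC 1.
Proof.
  intros Hm Hn. rewrite g_mn_aff. unfold aff. rewrite Cpow_1_l, <- RtoC_plus, <- RtoC_mult.
  assert (1 <= INR (m * n)) by (apply (le_INR 1); nia).
  replace (/ INR (m * n) * (1 + (INR (m * n) - 1))) with 1 by (field; lra). apply Cpow_1_l.
Qed.

Lemma g_n_deriv (n : nat) : (1 <= n)%nat -> has_cderiv (g_n n) (RtoC 1) (RtoC 1).
Proof.
  intros Hn. destruct n as [|k]; [lia|].
  eapply qdiff_cderiv.
  - exact (qdiff_mul _ _ _ _ _ (qdiff_const (RtoC (/ INR (S k))) (RtoC 1))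
             (qdiff_add _ _ _ _ _ (qdiff_pow _ _ _ k (qdiff_id (RtoC 1)))
                (qdiff_const (RtoC (INR (S k) - 1)) (RtoC 1)))).
  - cbv beta. rewrite !Cpow_1_l, Cmult_0_l, Cplus_0_l, Cplus_0_r, !Cmult_1_r, <- RtoC_mult.
    assert (1 <= INR (S k)) by (apply (le_INR 1); lia). f_equal. field. lra.
Qed.

Lemma g_mn_deriv (m n : nat) : (1 <= m)%nat -> (1 <= n)%nat -> has_cderiv (g_mn m n) (RtoC 1) (RtoC 1).
Proof.
  intros Hm Hn. destruct m as [|j]; [lia|]. destruct n as [|k]; [lia|].
  set (N := INR (S j * S k)).
  eapply qdiff_cderiv.
  - exact (qdiff_mul _ _ _ _ _ (qdiff_const (RtoC (/ N ^ S k)) (RtoC 1))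
             (qdiff_pow _ _ _ k
                (qdiff_add _ _ _ _ _ (qdiff_pow _ _ _ j (qdiff_id (RtoC 1)))
                   (qdiff_const (RtoC (N - 1)) (RtoC 1))))).
  - cbv beta. rewrite !Cpow_1_l, Cmult_0_l, Cplus_0_l, Cplus_0_r, !Cmult_1_r, <- RtoC_plus,
      <- RtoC_pow, <- !RtoC_mult. f_equal.
    assert (HN : N = INR (S j) * INR (S k)) by apply mult_INR.
    assert (1 <= INR (S j)) by (apply (le_INR 1); lia).
    assert (1 <= INR (S k)) by (apply (le_INR 1); lia).
    replace (1 + (N - 1)) with N by ring. simpl pow. rewrite HN. field.
    repeat split; try apply pow_nonzero; nra.
Qed.

Import Pilot.Defs.
Open Scope R_scope.

Theorem lemma2p5 (m n : nat) (hm : (2 <= m)%nat) (hn : (2 <= n)%nat) :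
  (* 1 is a parabolic fixed point with multiplier 1 for both maps *)
  (g_n n (RtoC 1) = RtoC 1 /\ has_cderiv (g_n n) (RtoC 1) (RtoC 1)) /\
  (g_mn m n (RtoC 1) = RtoC 1 /\ has_cderiv (g_mn m n) (RtoC 1) (RtoC 1)) /\
  (* invariance of the disks D_r *)
  (forall r, 0 <= r <= 1 -> forall z, cdisk_r r z ->
     disk_r r (g_n n z) \/ g_n n z = RtoC 1) /\
  (forall r, 0 <= r <= 1 -> forall z, cdisk_r r z ->
     disk_r r (g_mn m n z) \/ g_mn m n z = RtoC 1) /\
  (* the unit disk lies in the immediate parabolic basins of 1 *)
  (forall z, unit_disk z -> immediate_basin (g_n n) (RtoC 1) z) /\
  (forall z, unit_disk z -> immediate_basin (g_mn m n) (RtoC 1) z).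
Proof.
  assert (Hm1 : (1 <= m)%nat) by lia. assert (Hn1 : (1 <= n)%nat) by lia.
  assert (kn : 0 < INR n - 1) by (assert (2 <= INR n) by (apply (le_INR 2); lia); lra).
  assert (kmn : 0 < INR m - / INR n).
  { assert (2 <= INR m) by (apply (le_INR 2); lia). assert (2 <= INR n) by (apply (le_INR 2); lia).
    assert (/ INR n <= / 2) by (apply Rinv_le_contravar; lra). lra. }
  pose proof (fun t z => horo_g_n n t z hn) as Hn_horo.
  pose proof (fun t z => horo_g_mn m n t z hm hn) as Hmn_horo.
  split; [split; [apply g_n_one | apply g_n_deriv]; exact Hn1|].
  split; [split; [apply g_mn_one | apply g_mn_deriv]; assumption|].
  split; [apply (disk_invariant _ _ kn Hn_horo (g_n_one n Hn1)); intros z; apply closed_g_n; exact hn|].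
  split; [apply (disk_invariant _ _ kmn Hmn_horo (g_mn_one m n Hm1 Hn1)); intros z; apply closed_g_mn; assumption|].
  split; intros z Hz; [apply (immediate_basin_of_unit_disk _ _ kn Hn_horo)
                      | apply (immediate_basin_of_unit_disk _ _ kmn Hmn_horo)]; exact Hz.
Qed.
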